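(* Let $\Gamma$ be the first Grigorchuk group with generators $a,b,c,d$, acting on the right on $\{0,1\}^{\mathbb N}$, and let $\rho=111\cdots$. For a word $w=w_1\cdots w_n$ over $\{a,b,c,d\}$ set $\delta(w)=\#\{\rho\,w_{i+1}\cdots w_n: i=0,\dots,n\}$. Let $\eta$ be the real root of $t^3+t^2+t-2$ and $\alpha=\log 2/\log(2/\eta)$. There exist constants $C_1,C_2>0$ such that for every positive integer $\ell$: (1) every word $w$ over $\{a,b,c,d\}$ of length $\ell$ satisfies $\delta(w)\le C_1\ell^\alpha$; (2) there exists a word $w$ over $\{a,b,c,d\}$ of length $\ell$ with $\delta(w)\ge C_2\ell^\alpha$.
   Context: The first Grigorchuk group $\Gamma$ is the group of permutations of $\{0,1\}^{\mathbb N}$ (acting on the right) generated by $a,b,c,d$, defined recursively for $x\in\{0,1\}$ and infinite binary sequences $u$ by: $(xu)a=(1-x)u$; $(0u)b=0(ua)$, $(1u)b=1(uc)$; $(0u)c=0(ua)$, $(1u)c=1(ud)$; $(0u)d=0u$, $(1u)d=1(ub)$. *)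

From Stdlib Require Import Reals List Arith ClassicalEpsilon.
Import ListNotations.

Inductive letter := La | Lb | Lc | Ld.

(* Infinite binary sequences {0,1}^N, with 1 = true. *)
Definition bseq := nat -> bool.

Definition shift (u : bseq) : bseq := fun k => u (S k).

(* act_bit g u k = the k-th bit of (u)g, following the recursive definition
   (xu)a=(1-x)u; (0u)b=0(ua), (1u)b=1(uc); (0u)c=0(ua), (1u)c=1(ud);
   (0u)d=0u, (1u)d=1(ub). *)
Fixpoint act_bit (g : letter) (u : bseq) (k : nat) {struct k} : bool :=
  match k with
  | O => match g with La => negb (u O) | _ => u O end
  | S k' =>
    match g with
    | La => u (S k')
    | Lb => if u O then act_bit Lc (shift u) k' else act_bit La (shift u) k'
    | Lc => if u O then act_bit Ld (shift u) k' else act_bit La (shift u) k'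
    | Ld => if u O then act_bit Lb (shift u) k' else u (S k')
    end
  end.

Definition act (u : bseq) (g : letter) : bseq := fun k => act_bit g u k.

Definition act_word (u : bseq) (w : list letter) : bseq := fold_left act w u.

Definition rho : bseq := fun _ => true.

Definition orbit_points (w : list letter) : list bseq :=
  map (fun i => act_word rho (skipn i w)) (seq 0 (S (length w))).

Definition seq_in (x : bseq) (l : list bseq) : Prop :=
  exists y, In y l /\ forall k, x k = y k.

Fixpoint ndistinct (l : list bseq) : nat :=
  match l with
  | [] => O
  | x :: l' =>
    (if excluded_middle_informative (seq_in x l') then O else 1%nat)
    + ndistinct l'
  end.

Definition delta (w : list letter) : nat := ndistinct (orbit_points w).

(* Every word equals, in Γ, a normal form v0 a v1 a ... a vm with vi in {1, b, c, d}; since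
   b, c, d fix ρ, the orbit points of a word are among those of its normal form, which split
   between the two subtrees according to the two sections of the word.

   Upper bound: the orbit of a normal form has at most as many points as those of its two
   sections together, while Bartholdi's norm shrinks by the factor η on passing to sections.
   As (η/2)^α = 1/2, concavity of t ↦ t^α makes δ <= C ‖N‖^α an inductive invariant for
   normal forms N, and ‖w‖ <= |w|.

   Lower bound: a transducer turns a normal form N into one whose two sections both begin
   with N, so the number of orbit points at least doubles while a weighted length grows by
   at most the factor 2/η = 1 + η + η² plus a constant. After k steps the word has length
   O((2/η)^k) and δ >= 2^k = ((2/η)^k)^α. *)

From Stdlib Require Import Reals List Lia Psatz Bool FunctionalExtensionality ClassicalEpsilon.
Import ListNotations.

Lemma act_word_app u w1 w2 : act_word u (w1 ++ w2) = act_word (act_word u w1) w2.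
Proof. unfold act_word. now rewrite fold_left_app. Qed.

(* The wreath recursion: [(s u) g = (letter_head g s) (u · letter_section g s)]. *)
Definition letter_section (g : letter) (s : bool) : list letter :=
  match g, s with
  | Lb, true => [Lc] | Lb, false => [La]
  | Lc, true => [Ld] | Lc, false => [La]
  | Ld, true => [Lb] | Ld, false => []
  | La, _ => []
  end.

Definition letter_head (g : letter) (s : bool) : bool :=
  match g with La => negb s | _ => s end.

Fixpoint word_section (s : bool) (w : list letter) : list letter :=
  match w with
  | [] => []
  | g :: w' => letter_section g s ++ word_section (letter_head g s) w'
  end.

Fixpoint count_a (w : list letter) : nat :=
  match w with
  | [] => 0
  | La :: w' => S (count_a w')
  | _ :: w' => count_a w'
  end.

Definition parity_a (w : list letter) : bool := Nat.odd (count_a w).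

Lemma count_a_app w1 w2 : count_a (w1 ++ w2) = count_a w1 + count_a w2.
Proof. induction w1 as [|g w1 IH]; simpl; auto. destruct g; simpl; lia. Qed.

Lemma letter_head_parity g w s :
  xorb (parity_a w) (letter_head g s) = xorb (parity_a (g :: w)) s.
Proof.
  unfold parity_a. destruct g; simpl; auto.
  rewrite Nat.odd_succ, <- Nat.negb_odd.
  destruct (Nat.odd (count_a w)), s; reflexivity.
Qed.

Lemma shift_act u g : shift (act u g) = act_word (shift u) (letter_section g (u 0)).
Proof.
  apply functional_extensionality; intro k. unfold shift, act.
  destruct g; simpl; destruct (u 0); reflexivity.
Qed.

Lemma act_head u g : act u g 0 = letter_head g (u 0).
Proof. destruct g; reflexivity. Qed.

Lemma act_word_head_shift w : forall u,
  act_word u w 0 = xorb (parity_a w) (u 0) /\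
  shift (act_word u w) = act_word (shift u) (word_section (u 0) w).
Proof.
  induction w as [|g w IH]; intro u; [split; reflexivity|].
  change (act_word u (g :: w)) with (act_word (act u g) w).
  destruct (IH (act u g)) as [Hhead Hshift]. split.
  - now rewrite Hhead, act_head, letter_head_parity.
  - rewrite Hshift, shift_act, act_head. simpl. now rewrite act_word_app.
Qed.

Lemma word_section_app s w1 w2 :
  word_section s (w1 ++ w2) = word_section s w1 ++ word_section (xorb (parity_a w1) s) w2.
Proof.
  revert s; induction w1 as [|g w1 IH]; intro s; simpl; [reflexivity|].
  now rewrite IH, app_assoc, letter_head_parity.
Qed.

Definition consbit (b : bool) (x : bseq) : bseq :=
  fun k => match k with O => b | S k => x k end.

Lemma consbit_inj b x y : consbit b x = consbit b y -> x = y.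
Proof.
  intro H. apply functional_extensionality; intro k.
  change (x k) with (consbit b x (S k)). now rewrite H.
Qed.

Lemma act_word_consbit u w :
  act_word u w =
  consbit (xorb (parity_a w) (u 0)) (act_word (shift u) (word_section (u 0) w)).
Proof.
  destruct (act_word_head_shift w u) as [Hhead Hshift].
  apply functional_extensionality; intros [|k]; [exact Hhead|].
  now rewrite <- Hshift.
Qed.

Lemma act_word_rho w :
  act_word rho w = consbit (negb (parity_a w)) (act_word rho (word_section true w)).
Proof. rewrite act_word_consbit. unfold rho at 1. now rewrite xorb_true_r. Qed.

Definition word_eq (w1 w2 : list letter) := forall u, act_word u w1 = act_word u w2.
Definition word_eq_upto (n : nat) (w1 w2 : list letter) :=
  forall u k, (k < n) -> act_word u w1 k = act_word u w2 k.

Lemma word_eq_upto_S n w1 w2 : parity_a w1 = parity_a w2 ->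
  (forall s, word_eq_upto n (word_section s w1) (word_section s w2)) ->
  word_eq_upto (S n) w1 w2.
Proof.
  intros Hp Hs u k Hk. rewrite (act_word_consbit u w1), (act_word_consbit u w2), Hp.
  destruct k as [|k]; [reflexivity|]. apply Hs. lia.
Qed.

Lemma word_eq_of_upto w1 w2 : (forall n, word_eq_upto n w1 w2) -> word_eq w1 w2.
Proof. intros H u. apply functional_extensionality; intro k. apply (H (S k)); lia. Qed.

Lemma word_eq_aa : word_eq [La; La] [].
Proof.
  intro u. apply functional_extensionality; intros [|k]; cbn; [apply negb_involutive|reflexivity].
Qed.

Lemma word_eq_app_l p w1 w2 : word_eq w1 w2 -> word_eq (p ++ w1) (p ++ w2).
Proof. intros H u. rewrite !act_word_app. apply H. Qed.

Lemma word_eq_app_r p w1 w2 : word_eq w1 w2 -> word_eq (w1 ++ p) (w2 ++ p).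
Proof. intros H u. now rewrite !act_word_app, H. Qed.

Lemma word_eq_trans w1 w2 w3 : word_eq w1 w2 -> word_eq w2 w3 -> word_eq w1 w3.
Proof. intros H1 H2 u. now rewrite H1. Qed.

Inductive klein := K1 | Kb | Kc | Kd.

Definition klein_word (v : klein) : list letter :=
  match v with K1 => [] | Kb => [Lb] | Kc => [Lc] | Kd => [Ld] end.

Definition klein_of_letter (g : letter) : klein :=
  match g with La => K1 | Lb => Kb | Lc => Kc | Ld => Kd end.

Definition klein_mul (x y : klein) : klein :=
  match x, y with
  | K1, y => y | x, K1 => x
  | Kb, Kb | Kc, Kc | Kd, Kd => K1
  | Kb, Kc | Kc, Kb => Kd
  | Kb, Kd | Kd, Kb => Kc
  | Kc, Kd | Kd, Kc => Kb
  end.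

Definition klein_rot (x : klein) : klein :=
  match x with K1 => K1 | Kb => Kc | Kc => Kd | Kd => Kb end.

Definition klein_rot_inv (x : klein) : klein :=
  match x with K1 => K1 | Kc => Kb | Kd => Kc | Kb => Kd end.

Lemma word_section_klein s v : word_section s (klein_word v) =
  if s then klein_word (klein_rot v) else match v with Kb | Kc => [La] | _ => [] end.
Proof. destruct v, s; reflexivity. Qed.

Lemma parity_a_klein v : parity_a (klein_word v) = false.
Proof. destruct v; reflexivity. Qed.

Lemma count_a_klein v : count_a (klein_word v) = 0.
Proof. destruct v; reflexivity. Qed.

Lemma word_eq_klein_mul x y : word_eq (klein_word x ++ klein_word y) (klein_word (klein_mul x y)).
Proof.
  apply word_eq_of_upto. intro n. revert x y. induction n as [|n IH]; intros x y.
  - intros u k Hk. lia.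
  - apply word_eq_upto_S.
    + unfold parity_a. rewrite count_a_app. destruct x, y; reflexivity.
    + intros [|].
      * rewrite word_section_app, parity_a_klein, !word_section_klein.
        replace (klein_rot (klein_mul x y)) with (klein_mul (klein_rot x) (klein_rot y))
          by (destruct x, y; reflexivity).
        apply IH.
      * intros u k _. rewrite word_section_app, parity_a_klein, !word_section_klein.
        destruct x, y; simpl; try reflexivity;
          change (act (act u La) La) with (act_word u [La; La]); now rewrite (word_eq_aa u).
Qed.

Lemma word_eq_square g : word_eq [g; g] [].
Proof.
  destruct g; [apply word_eq_aa | apply (word_eq_klein_mul Kb Kb)
              | apply (word_eq_klein_mul Kc Kc) | apply (word_eq_klein_mul Kd Kd)].
Qed.

Lemma act_word_rev_cancel x w : act_word (act_word x w) (rev w) = x.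
Proof.
  revert x; induction w as [|g w IH]; intro x; [reflexivity|].
  change (act_word x (g :: w)) with (act_word (act x g) w).
  simpl rev. rewrite act_word_app, IH. apply (word_eq_square g).
Qed.

Lemma act_word_inj w x y : act_word x w = act_word y w -> x = y.
Proof. intro H. now rewrite <- (act_word_rev_cancel x w), <- (act_word_rev_cancel y w), H. Qed.

Lemma act_rho_fixed k g : g <> La -> act_bit g rho k = true.
Proof.
  revert g; induction k as [|k IH]; intros g Hg; destruct g; simpl; try reflexivity;
    try congruence; apply IH; discriminate.
Qed.

Lemma act_word_rho_klein v : act_word rho (klein_word v) = rho.
Proof.
  destruct v; [reflexivity|..]; apply functional_extensionality; intro k;
    apply act_rho_fixed; discriminate.
Qed.

(* [nf_split w = (v0, [v1; ...; vm])] where [w = v0 a v1 a ... a vm] in Γ. *)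
Fixpoint nf_split (w : list letter) : klein * list klein :=
  match w with
  | [] => (K1, [])
  | La :: w' => let (v, N) := nf_split w' in (K1, v :: N)
  | g :: w' => let (v, N) := nf_split w' in (klein_mul (klein_of_letter g) v, N)
  end.

Definition nf (w : list letter) : list klein := snd (nf_split w).

Definition nf_word (N : list klein) : list letter := flat_map (fun v => La :: klein_word v) N.

Lemma nf_word_app N1 N2 : nf_word (N1 ++ N2) = nf_word N1 ++ nf_word N2.
Proof. apply flat_map_app. Qed.

Lemma nf_word_cons v N : nf_word (v :: N) = La :: klein_word v ++ nf_word N.
Proof. reflexivity. Qed.

Lemma word_eq_nf_split w :
  word_eq w (klein_word (fst (nf_split w)) ++ nf_word (snd (nf_split w))).
Proof.
  induction w as [|g w IH]; [intro u; reflexivity|]. simpl.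
  destruct (nf_split w) as [v N]. simpl in IH.
  destruct g.
  - exact (word_eq_app_l [La] _ _ IH).
  - eapply word_eq_trans; [exact (word_eq_app_l [Lb] _ _ IH)|].
    rewrite app_assoc. apply word_eq_app_r, (word_eq_klein_mul Kb).
  - eapply word_eq_trans; [exact (word_eq_app_l [Lc] _ _ IH)|].
    rewrite app_assoc. apply word_eq_app_r, (word_eq_klein_mul Kc).
  - eapply word_eq_trans; [exact (word_eq_app_l [Ld] _ _ IH)|].
    rewrite app_assoc. apply word_eq_app_r, (word_eq_klein_mul Kd).
Qed.

Lemma act_word_rho_nf w : act_word rho w = act_word rho (nf_word (nf w)).
Proof. now rewrite (word_eq_nf_split w rho), act_word_app, act_word_rho_klein. Qed.

Lemma nf_skipn w j : exists k, nf (skipn j w) = skipn k (nf w).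
Proof.
  revert j; induction w as [|g w IH]; intros j; [exists 0; now destruct j|].
  destruct j as [|j]; [now exists 0|].
  simpl skipn. destruct (IH j) as [k Hk]. rewrite Hk. unfold nf; simpl.
  destruct (nf_split w) as [v N]. destruct g; [exists (S k) | exists k..]; reflexivity.
Qed.

Lemma nf_app_skipn w1 w2 : skipn (count_a w1) (nf (w1 ++ w2)) = nf w2.
Proof.
  induction w1 as [|g w1 IH]; [reflexivity|].
  unfold nf in *; simpl. destruct (nf_split (w1 ++ w2)) as [v N]. destruct g; apply IH.
Qed.

Lemma length_nf w : length (nf w) = count_a w.
Proof.
  induction w as [|g w IH]; unfold nf in *; simpl; [reflexivity|].
  destruct (nf_split w) as [v N]. destruct g; simpl in *; lia.
Qed.

Lemma count_a_nf_word N : count_a (nf_word N) = length N.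
Proof.
  induction N as [|v N IH]; [reflexivity|].
  simpl. now rewrite count_a_app, IH, count_a_klein.
Qed.

Lemma parity_a_nf_word N : parity_a (nf_word N) = Nat.odd (length N).
Proof. unfold parity_a. now rewrite count_a_nf_word. Qed.

Lemma word_section_nf_word_cons s v N :
  word_section s (nf_word (v :: N)) =
  word_section (negb s) (klein_word v) ++ word_section (negb s) (nf_word N).
Proof. simpl. now rewrite word_section_app, parity_a_klein. Qed.

Definition bseq_eq_dec (x y : bseq) : {x = y} + {x <> y} :=
  excluded_middle_informative (x = y).

Lemma seq_in_In x l : seq_in x l <-> In x l.
Proof.
  split; [|intro H; now exists x].
  intros [y [Hy Hxy]]. replace x with y; auto. now apply functional_extensionality.
Qed.

Lemma ndistinct_nodup l : ndistinct l = length (nodup bseq_eq_dec l).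
Proof.
  induction l as [|x l IH]; [reflexivity|]. simpl.
  destruct (excluded_middle_informative (seq_in x l)) as [H|H];
    destruct (in_dec bseq_eq_dec x l) as [H'|H']; simpl; rewrite ?IH; try reflexivity.
  - exfalso; apply H'; now apply seq_in_In.
  - exfalso; apply H; now apply seq_in_In.
Qed.

Lemma NoDup_length_le_ndistinct m l : NoDup m -> incl m l -> length m <= ndistinct l.
Proof.
  intros Hm H. rewrite ndistinct_nodup. apply NoDup_incl_length; auto.
  intros x Hx. apply nodup_In. auto.
Qed.

Lemma ndistinct_incl l m : incl l m -> ndistinct l <= ndistinct m.
Proof.
  intro H. rewrite (ndistinct_nodup l). apply NoDup_length_le_ndistinct; [apply NoDup_nodup|].
  intros x Hx. apply H. now apply nodup_In in Hx.
Qed.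

Lemma ndistinct_le_length l : ndistinct l <= length l.
Proof.
  rewrite ndistinct_nodup. apply NoDup_incl_length; [apply NoDup_nodup|].
  intros x Hx. now apply nodup_In in Hx.
Qed.

Lemma ndistinct_app l1 l2 : ndistinct (l1 ++ l2) <= ndistinct l1 + ndistinct l2.
Proof.
  rewrite !ndistinct_nodup, <- length_app. apply NoDup_incl_length; [apply NoDup_nodup|].
  intros x Hx. apply nodup_In, in_app_or in Hx. apply in_or_app.
  destruct Hx; [left|right]; now apply nodup_In.
Qed.

Lemma ndistinct_map (g : bseq -> bseq) l : ndistinct (map g l) <= ndistinct l.
Proof.
  rewrite !ndistinct_nodup, <- (length_map g (nodup bseq_eq_dec l)).
  apply NoDup_incl_length; [apply NoDup_nodup|].
  intros x Hx. apply nodup_In, in_map_iff in Hx. destruct Hx as [y [<- Hy]].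
  apply in_map, nodup_In, Hy.
Qed.

Lemma ndistinct_pos x l : 1 <= ndistinct (x :: l).
Proof.
  apply (NoDup_length_le_ndistinct [x]); [repeat constructor; auto|].
  intros y [<-|[]]. now left.
Qed.

(* The points ρ (a v_{k+1} ... a v_m) of [N = [v_1; ...; v_m]]; as b, c, d fix ρ, these are
   all the orbit points of any word with normal form [N]. *)
Definition nf_points (N : list klein) : list bseq :=
  map (fun k => act_word rho (nf_word (skipn k N))) (seq 0 (S (length N))).

Definition nf_delta (N : list klein) : nat := ndistinct (nf_points N).

Lemma In_nf_points N k : In (act_word rho (nf_word (skipn k N))) (nf_points N).
Proof.
  unfold nf_points. destruct (Nat.le_gt_cases k (length N)) as [H|H].
  - apply (in_map (fun k => act_word rho (nf_word (skipn k N)))), in_seq. lia.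
  - rewrite skipn_all2 by lia. rewrite <- (skipn_all N).
    apply (in_map (fun k => act_word rho (nf_word (skipn k N)))), in_seq. lia.
Qed.

Lemma In_nf_points_app M1 M2 : In (act_word rho (nf_word M2)) (nf_points (M1 ++ M2)).
Proof.
  pose proof (In_nf_points (M1 ++ M2) (length M1)) as H.
  now rewrite skipn_app, skipn_all, Nat.sub_diag in H.
Qed.

Lemma nf_delta_le_length N : nf_delta N <= S (length N).
Proof.
  unfold nf_delta. rewrite ndistinct_le_length. unfold nf_points.
  now rewrite length_map, length_seq.
Qed.

Lemma In_orbit_points w i : In (act_word rho (skipn i w)) (orbit_points w).
Proof.
  unfold orbit_points. destruct (Nat.le_gt_cases i (length w)) as [H|H].
  - apply (in_map (fun i => act_word rho (skipn i w))), in_seq. lia.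
  - rewrite skipn_all2 by lia. rewrite <- (skipn_all w).
    apply (in_map (fun i => act_word rho (skipn i w))), in_seq. lia.
Qed.

Lemma delta_le_nf_delta w : delta w <= nf_delta (nf w).
Proof.
  apply ndistinct_incl. intros x Hx. unfold orbit_points in Hx.
  apply in_map_iff in Hx. destruct Hx as [i [<- _]].
  rewrite act_word_rho_nf. destruct (nf_skipn w i) as [k ->]. apply In_nf_points.
Qed.

Lemma nf_word_skipn N k : exists j, skipn j (nf_word N) = nf_word (skipn k N).
Proof.
  exists (length (nf_word (firstn k N))).
  rewrite <- (firstn_skipn k N) at 2.
  now rewrite nf_word_app, skipn_app, skipn_all, Nat.sub_diag.
Qed.

Lemma nf_delta_le_delta N : nf_delta N <= delta (nf_word N).
Proof.
  apply ndistinct_incl. intros x Hx. unfold nf_points in Hx.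
  apply in_map_iff in Hx. destruct Hx as [k [<- _]].
  destruct (nf_word_skipn N k) as [j <-]. apply In_orbit_points.
Qed.

Lemma delta_app_l p w : delta w <= delta (p ++ w).
Proof.
  apply ndistinct_incl. intros x Hx. unfold orbit_points in Hx.
  apply in_map_iff in Hx. destruct Hx as [i [<- _]].
  replace (skipn i w) with (skipn (length p + i) (p ++ w)); [apply In_orbit_points|].
  now rewrite skipn_app, skipn_all2, Nat.add_comm, Nat.add_sub by lia.
Qed.

Lemma delta_pos w : 1 <= delta w.
Proof. apply ndistinct_pos. Qed.

Lemma In_nf_points_section N k : k <= length N ->
  In (act_word rho (word_section true (nf_word (skipn k N))))
     (nf_points (nf (word_section (negb (Nat.odd k)) (nf_word N)))).
Proof.
  intro Hk.
  assert (E : nf_word N = nf_word (firstn k N) ++ nf_word (skipn k N))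
    by now rewrite <- nf_word_app, firstn_skipn.
  rewrite E, word_section_app, parity_a_nf_word, length_firstn, Nat.min_l by lia.
  replace (xorb (Nat.odd k) (negb (Nat.odd k))) with true by now destruct (Nat.odd k).
  rewrite act_word_rho_nf,
    <- (nf_app_skipn (word_section (negb (Nat.odd k)) (nf_word (firstn k N)))).
  apply In_nf_points.
Qed.

Lemma nf_delta_le_sections N :
  nf_delta N <= nf_delta (nf (word_section true (nf_word N)))
              + nf_delta (nf (word_section false (nf_word N))).
Proof.
  set (b := negb (Nat.odd (length N))).
  unfold nf_delta. etransitivity.
  - apply (ndistinct_incl _
      (map (consbit b) (nf_points (nf (word_section true (nf_word N)))) ++
       map (consbit (negb b)) (nf_points (nf (word_section false (nf_word N)))))).
    intros x Hx. unfold nf_points at 1 in Hx. apply in_map_iff in Hx.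
    destruct Hx as [k [<- Hk]]. apply in_seq in Hk.
    pose proof (In_nf_points_section N k ltac:(lia)) as Hin.
    rewrite act_word_rho, parity_a_nf_word, length_skipn.
    assert (Hodd : Nat.odd (length N) = xorb (Nat.odd k) (Nat.odd (length N - k)))
      by (rewrite <- Nat.odd_add; f_equal; lia).
    apply in_or_app. unfold b. rewrite Hodd.
    destruct (Nat.odd k); cbn [xorb]; rewrite ?negb_involutive; [right|left]; now apply in_map.
  - rewrite ndistinct_app. apply Nat.add_le_mono; apply ndistinct_map.
Qed.

Lemma count_a_word_section_le N :
  2 * count_a (word_section true (nf_word N)) <= length N + 1 /\
  2 * count_a (word_section false (nf_word N)) <= length N.
Proof.
  induction N as [|v N IH]; simpl; [lia|].
  rewrite !word_section_app, !parity_a_klein, !count_a_app, !word_section_klein.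
  destruct v; simpl; lia.
Qed.

Definition flat_pairs (P : list (klein * klein)) : list klein :=
  flat_map (fun '(x, y) => [x; y]) P.

Lemma flat_pairs_app P1 P2 : flat_pairs (P1 ++ P2) = flat_pairs P1 ++ flat_pairs P2.
Proof. apply flat_map_app. Qed.

Lemma flat_pairs_cons x y P : flat_pairs ((x, y) :: P) = x :: y :: flat_pairs P.
Proof. reflexivity. Qed.

Lemma length_flat_pairs P : length (flat_pairs P) = 2 * length P.
Proof. induction P as [|[x y] P IH]; simpl; lia. Qed.

Lemma parity_a_flat_pairs P : parity_a (nf_word (flat_pairs P)) = false.
Proof. now rewrite parity_a_nf_word, length_flat_pairs, Nat.odd_mul. Qed.

Lemma word_section_flat_pairs_cons s x y P :
  word_section s (nf_word (flat_pairs ((x, y) :: P))) =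
  word_section (negb s) (klein_word x) ++ word_section s (klein_word y)
    ++ word_section s (nf_word (flat_pairs P)).
Proof.
  rewrite flat_pairs_cons, !word_section_nf_word_cons, negb_involutive.
  now rewrite app_assoc.
Qed.

Lemma count_a_word_section_klein_le s y : count_a (word_section s (klein_word y)) <= 1.
Proof. destruct s, y; simpl; lia. Qed.

Lemma count_a_word_section_true_klein y : count_a (word_section true (klein_word y)) = 0.
Proof. destruct y; reflexivity. Qed.

Lemma word_section_true_split P k :
  k <= count_a (word_section true (nf_word (flat_pairs P))) ->
  exists P1 P2, P = P1 ++ P2 /\ count_a (word_section true (nf_word (flat_pairs P1))) = k.
Proof.
  revert k; induction P as [|[x y] P IH]; intros k Hk.
  - exists [], []. simpl in *. split; auto; lia.
  - destruct k as [|k]; [now exists [], ((x, y) :: P)|].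
    rewrite word_section_flat_pairs_cons, !count_a_app, count_a_word_section_true_klein in Hk.
    cbn [negb] in Hk.
    pose proof (count_a_word_section_klein_le false x).
    destruct (IH (S k - count_a (word_section false (klein_word x)))) as [P1 [P2 [HP Hc]]];
      [lia|].
    exists ((x, y) :: P1), P2. split; [now rewrite HP|].
    rewrite word_section_flat_pairs_cons, !count_a_app, count_a_word_section_true_klein, Hc.
    cbn [negb]. lia.
Qed.

Lemma word_section_false_split P k :
  k < count_a (word_section false (nf_word (flat_pairs P))) ->
  exists P1 x y P2, P = P1 ++ (x, y) :: P2 /\
    count_a (word_section false (nf_word (flat_pairs P1))) = k.
Proof.
  revert k; induction P as [|[x y] P IH]; intros k Hk; [simpl in Hk; lia|].
  destruct k as [|k]; [now exists [], x, y, P|].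
  rewrite word_section_flat_pairs_cons, !count_a_app, count_a_word_section_true_klein in Hk.
  cbn [negb] in Hk.
  pose proof (count_a_word_section_klein_le false y).
  destruct (IH (S k - count_a (word_section false (klein_word y))))
    as [P1 [x' [y' [P2 [HP Hc]]]]]; [lia|].
  exists ((x, y) :: P1), x', y', P2. split; [now rewrite HP|].
  rewrite word_section_flat_pairs_cons, !count_a_app, count_a_word_section_true_klein, Hc.
  cbn [negb]. lia.
Qed.

Lemma nf_word_section_skipn s P1 P2 :
  nf (word_section s (nf_word (flat_pairs P2))) =
  skipn (count_a (word_section s (nf_word (flat_pairs P1))))
        (nf (word_section s (nf_word (flat_pairs (P1 ++ P2))))).
Proof.
  now rewrite flat_pairs_app, nf_word_app, word_section_app, parity_a_flat_pairs, xorb_false_l,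
    nf_app_skipn.
Qed.

Lemma skipn_app_le {A} (l1 l2 : list A) k :
  k <= length l1 -> skipn k (l1 ++ l2) = skipn k l1 ++ l2.
Proof. intro H. rewrite skipn_app. now replace (k - length l1) with 0 by lia. Qed.

Lemma In_nf_points_section_true P N Q x :
  nf (word_section true (nf_word (flat_pairs P))) = N ++ Q -> In x (nf_points N) ->
  In (consbit true (act_word x (nf_word Q))) (nf_points (flat_pairs P)).
Proof.
  intros HP Hx. unfold nf_points in Hx. apply in_map_iff in Hx.
  destruct Hx as [k [<- Hk]]. apply in_seq in Hk.
  destruct (word_section_true_split P k) as [P1 [P2 [-> Hc]]].
  { rewrite <- length_nf, HP, length_app. lia. }
  rewrite flat_pairs_app. replace (consbit true _) with (act_word rho (nf_word (flat_pairs P2)))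
    by (rewrite act_word_rho, parity_a_flat_pairs, act_word_rho_nf,
          (nf_word_section_skipn true P1 P2), HP, Hc, skipn_app_le, nf_word_app, act_word_app
          by lia; reflexivity).
  apply In_nf_points_app.
Qed.

Lemma In_nf_points_section_false P N Q x :
  nf (word_section false (nf_word (flat_pairs P))) = N ++ Q -> Q <> [] -> In x (nf_points N) ->
  In (consbit false (act_word x (nf_word Q))) (nf_points (flat_pairs P)).
Proof.
  intros HP HQ Hx. unfold nf_points in Hx. apply in_map_iff in Hx.
  destruct Hx as [k [<- Hk]]. apply in_seq in Hk.
  destruct (word_section_false_split P k) as [P1 [x' [y' [P2 [-> Hc]]]]].
  { rewrite <- length_nf, HP, length_app. destruct Q; [congruence|simpl; lia]. }
  rewrite flat_pairs_app, flat_pairs_cons in HP |- *.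
  rewrite nf_word_app, word_section_app, parity_a_flat_pairs, xorb_false_l,
    word_section_nf_word_cons, app_assoc in HP.
  cbn [negb] in HP.
  change (x' :: y' :: flat_pairs P2) with ([x'] ++ y' :: flat_pairs P2). rewrite app_assoc.
  replace (consbit false _) with (act_word rho (nf_word (y' :: flat_pairs P2)));
    [apply In_nf_points_app|].
  rewrite act_word_rho, parity_a_nf_word. cbn [length]. rewrite length_flat_pairs.
  replace (Nat.odd (S (2 * length P2))) with true by now rewrite Nat.odd_succ, Nat.even_mul.
  f_equal. rewrite act_word_rho_nf.
  rewrite <- (nf_app_skipn (word_section false (nf_word (flat_pairs P1))
                            ++ word_section true (klein_word x'))), HP.
  rewrite count_a_app, count_a_word_section_true_klein, Nat.add_0_r, Hc, skipn_app_le by lia.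
  now rewrite nf_word_app, act_word_app.
Qed.

(* Distinct points of [N] give distinct points of [flat_pairs P], once below the vertex 1
   and once below the vertex 0. *)
Lemma nf_delta_double P N Q1 Q2 :
  nf (word_section true (nf_word (flat_pairs P))) = N ++ Q1 ->
  nf (word_section false (nf_word (flat_pairs P))) = N ++ Q2 -> Q2 <> [] ->
  2 * nf_delta N <= nf_delta (flat_pairs P).
Proof.
  intros H1 H2 HQ2.
  set (F b Q x := consbit b (act_word x (nf_word Q))).
  set (L := nodup bseq_eq_dec (nf_points N)).
  assert (HF : forall b Q, NoDup (map (F b Q) L)).
  { intros b Q. apply NoDup_map_NoDup_ForallPairs; [|apply NoDup_nodup].
    intros x y _ _ Hxy. now apply consbit_inj, act_word_inj in Hxy. }
  replace (2 * nf_delta N) with (length (map (F true Q1) L ++ map (F false Q2) L))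
    by (unfold nf_delta, L; rewrite length_app, !length_map, ndistinct_nodup; lia).
  apply NoDup_length_le_ndistinct.
  - apply NoDup_app; auto.
    intros z Hz1 Hz2. apply in_map_iff in Hz1, Hz2.
    destruct Hz1 as [x [<- _]], Hz2 as [y [Hy _]].
    now apply (f_equal (fun u => u 0)) in Hy.
  - intros z Hz. apply in_app_or in Hz.
    destruct Hz as [Hz|Hz]; apply in_map_iff in Hz; destruct Hz as [x [<- Hx]];
      apply nodup_In in Hx.
    + now apply (In_nf_points_section_true P N Q1).
    + now apply (In_nf_points_section_false P N Q2).
Qed.

(* A transducer reading [S], with state [(o, G)]; its output reproduces [S] at the start of
   both sections of the resulting word (Lemmas lift_section_true and lift_section_false). *)
Fixpoint lift (o : bool) (G : klein) (S : list klein) : list (klein * klein) :=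
  match S with
  | [] => if o then [(Kb, Kb); (Kb, Kb)] else [(klein_rot_inv G, Kb); (Kb, Kb); (Kb, Kb)]
  | s :: S' =>
    if o then
      match s with
      | Kb => (Kb, Kd) :: lift false Kd S'
      | _ => (klein_rot_inv s, klein_rot_inv s) :: lift true G S'
      end
    else
      match s with
      | Kb => (klein_rot_inv G, Kb) :: (Kd, Kc) :: lift true G S'
      | _ => (klein_rot_inv G, klein_rot_inv s) :: lift false s S'
      end
  end.

Definition nontrivial (S : list klein) : Prop := Forall (fun v => v <> K1) S.

Lemma lift_section_true S o G : nontrivial S -> G = Kc \/ G = Kd ->
  exists Q, nf_split (word_section true (nf_word (flat_pairs (lift o G S)))) = (K1, S ++ Q).
Proof.
  revert o G; induction S as [|s S IH]; intros o G HS HG.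
  - destruct o; destruct HG as [-> | ->]; eexists; reflexivity.
  - inversion HS as [|? ? Hs HS']; subst.
    destruct o, s; try congruence; simpl lift; rewrite ?word_section_flat_pairs_cons.
    + destruct (IH false Kd HS' (or_intror eq_refl)) as [Q HQ].
      exists Q. simpl. now rewrite HQ.
    + destruct (IH true G HS' HG) as [Q HQ]. exists Q. simpl. now rewrite HQ.
    + destruct (IH true G HS' HG) as [Q HQ]. exists Q. simpl. now rewrite HQ.
    + destruct (IH true G HS' HG) as [Q HQ]. exists Q.
      destruct HG as [-> | ->]; simpl; now rewrite HQ.
    + destruct (IH false Kc HS' (or_introl eq_refl)) as [Q HQ]. exists Q.
      destruct HG as [-> | ->]; simpl; now rewrite HQ.
    + destruct (IH false Kd HS' (or_intror eq_refl)) as [Q HQ]. exists Q.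
      destruct HG as [-> | ->]; simpl; now rewrite HQ.
Qed.

Lemma lift_section_false S : nontrivial S ->
  (forall G, G = Kc \/ G = Kd ->
     nf_split (word_section false (nf_word (flat_pairs (lift false G S))))
     = (G, S ++ [Kc; Kc; K1])) /\
  (forall G, exists h T,
     nf_split (word_section false (nf_word (flat_pairs (lift true G S)))) = (h, T) /\
     h :: T = S ++ [Kc; Kc; K1]).
Proof.
  induction S as [|s S IH]; intros HS.
  - split; [intros G [-> | ->]; reflexivity | intros G; now exists Kc, [Kc; K1]].
  - inversion HS as [|? ? Hs HS']; subst. destruct (IH HS') as [IH0 IH1]. split.
    + intros G HG. destruct s; try congruence; simpl lift; rewrite ?word_section_flat_pairs_cons.
      * destruct (IH1 G) as [h [T [E1 E2]]].
        destruct HG as [-> | ->]; simpl; rewrite E1; simpl; now rewrite E2.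
      * specialize (IH0 Kc (or_introl eq_refl)).
        destruct HG as [-> | ->]; simpl; now rewrite IH0.
      * specialize (IH0 Kd (or_intror eq_refl)).
        destruct HG as [-> | ->]; simpl; now rewrite IH0.
    + intros G. destruct s; try congruence; simpl lift; rewrite ?word_section_flat_pairs_cons.
      * specialize (IH0 Kd (or_intror eq_refl)).
        exists Kb, (S ++ [Kc; Kc; K1]). simpl. now rewrite IH0.
      * destruct (IH1 G) as [h [T [E1 E2]]].
        exists Kc, (h :: T). simpl. rewrite E1. split; [reflexivity|now rewrite E2].
      * destruct (IH1 G) as [h [T [E1 E2]]].
        exists Kd, (h :: T). simpl. rewrite E1. split; [reflexivity|now rewrite E2].
Qed.

Lemma lift_nontrivial S o G : nontrivial S -> G <> K1 -> nontrivial (flat_pairs (lift o G S)).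
Proof.
  unfold nontrivial. revert o G; induction S as [|s S IH]; intros o G HS HG.
  - destruct o; unfold flat_pairs; simpl; repeat constructor; try discriminate;
      destruct G; simpl; congruence.
  - inversion HS as [|? ? Hs HS']; subst.
    destruct o, s; try congruence; simpl lift; rewrite ?flat_pairs_cons;
      repeat constructor; try discriminate; try (apply IH; auto; discriminate);
      destruct G; simpl; congruence.
Qed.

Lemma nf_delta_lift N :
  nontrivial N -> 2 * nf_delta N <= nf_delta (flat_pairs (lift false Kc N)).
Proof.
  intro HN.
  destruct (lift_section_true N false Kc HN (or_introl eq_refl)) as [Q1 H1].
  pose proof (proj1 (lift_section_false N HN) Kc (or_introl eq_refl)) as H2.
  apply (nf_delta_double _ N Q1 [Kc; Kc; K1]);
    [unfold nf; now rewrite H1 | unfold nf; now rewrite H2 | discriminate].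
Qed.

Lemma length_nf_word N : nontrivial N -> length (nf_word N) = 2 * length N.
Proof.
  intro HN. induction N as [|v N IH]; [reflexivity|].
  inversion HN as [|? ? Hv HN']; subst.
  rewrite nf_word_cons. cbn [length]. rewrite length_app, IH by exact HN'.
  destruct v; simpl; try congruence; lia.
Qed.

Fixpoint witness_nf (k : nat) : list klein :=
  match k with O => [] | S k => flat_pairs (lift false Kc (witness_nf k)) end.

Lemma witness_nf_nontrivial k : nontrivial (witness_nf k).
Proof.
  induction k as [|k IH]; simpl; [constructor|]. apply lift_nontrivial; [exact IH | discriminate].
Qed.

Lemma nf_delta_witness_nf k : 2 ^ k <= nf_delta (witness_nf k).
Proof.
  induction k as [|k IH]; [apply ndistinct_pos|].
  pose proof (nf_delta_lift (witness_nf k) (witness_nf_nontrivial k)). simpl. lia.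
Qed.

Open Scope R_scope.

Lemma ln_le_sub_1 x : 0 < x -> ln x <= x - 1.
Proof. intro Hx. pose proof (exp_ineq1_le (ln x)) as H. rewrite exp_ln in H; lra. Qed.

Lemma exp_le_exp x y : x <= y -> exp x <= exp y.
Proof. intros [H|H]; [left; now apply exp_increasing | subst; apply Rle_refl]. Qed.

Lemma Rpower_pos x a : 0 < Rpower x a.
Proof. apply exp_pos. Qed.

Lemma Rpower_1_l a : Rpower 1 a = 1.
Proof. unfold Rpower. now rewrite ln_1, Rmult_0_r, exp_0. Qed.

Lemma Rpower_Rpower_inv a x : 0 < a -> 0 < x -> Rpower (Rpower x (/ a)) a = x.
Proof. intros Ha Hx. rewrite Rpower_mult, Rinv_l by lra. now apply Rpower_1. Qed.

(* Weighted AM-GM, from [ln t <= t - 1] at [t = x/m] and [t = 1/m]. *)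
Lemma Rpower_le_affine a x : 0 < a < 1 -> 0 < x -> Rpower x a <= a * x + 1 - a.
Proof.
  intros Ha Hx. set (m := a * x + 1 - a).
  assert (Hm : 0 < m) by (unfold m; nra).
  assert (H1 := ln_le_sub_1 (x / m) ltac:(apply Rdiv_lt_0_compat; lra)).
  assert (H2 := ln_le_sub_1 (/ m) ltac:(apply Rinv_0_lt_compat; lra)).
  rewrite ln_Rinv in H2 by lra.
  unfold Rdiv in H1. rewrite ln_mult, ln_Rinv in H1 by (try apply Rinv_0_lt_compat; lra).
  assert (Hsum : a * (x * / m - 1) + (1 - a) * (/ m - 1) = 0) by (unfold m in *; field; lra).
  assert (Hln : a * ln x <= ln m) by nra.
  unfold Rpower. rewrite <- (exp_ln m) by lra. apply exp_le_exp. lra.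
Qed.

Lemma Rpower_concave_mid a x y : 0 < a < 1 -> 0 < x -> 0 < y ->
  Rpower x a + Rpower y a <= 2 * Rpower ((x + y) / 2) a.
Proof.
  intros Ha Hx Hy. set (m := (x + y) / 2). assert (Hm : 0 < m) by (unfold m; lra).
  replace x with (m * (x / m)) at 1 by (field; lra).
  replace y with (m * (y / m)) at 1 by (field; lra).
  rewrite <- !Rpower_mult_distr by (try apply Rdiv_lt_0_compat; lra).
  pose proof (Rpower_le_affine a (x / m) Ha ltac:(apply Rdiv_lt_0_compat; lra)).
  pose proof (Rpower_le_affine a (y / m) Ha ltac:(apply Rdiv_lt_0_compat; lra)).
  assert (Hs : x / m + y / m = 2) by (unfold m in *; field; lra).
  pose proof (Rpower_pos m a). clearbody m.
  apply Rle_trans with (Rpower m a * (a * (x / m + y / m) + 2 - 2 * a)); [nra|].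
  rewrite Hs. lra.
Qed.

Lemma INR_lt_pow2 n : INR n < 2 ^ n.
Proof.
  induction n as [|n IH]; [simpl; lra|].
  rewrite S_INR. change (2 ^ S n) with (2 * 2 ^ n).
  assert (1 <= 2 ^ n) by (apply pow_R1_Rle; lra). lra.
Qed.

Section Eta.

Variable eta : R.
Hypothesis eta_root : eta ^ 3 + eta ^ 2 + eta - 2 = 0.

Lemma eta_bounds : 0 < eta < 1.
Proof. split; nra. Qed.

Lemma two_div_eta : 2 / eta = 1 + eta + eta ^ 2.
Proof. pose proof eta_bounds. field_simplify_eq; nra. Qed.

Lemma two_lt_two_div_eta : 2 < 2 / eta.
Proof. pose proof eta_bounds. rewrite two_div_eta. nra. Qed.

Definition alpha : R := ln 2 / ln (2 / eta).

Lemma ln_two_div_eta_pos : 0 < ln (2 / eta).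
Proof. rewrite <- ln_1. apply ln_increasing; pose proof two_lt_two_div_eta; lra. Qed.

Lemma alpha_bounds : 0 < alpha < 1.
Proof.
  pose proof ln_two_div_eta_pos.
  assert (Hl2 : 0 < ln 2) by (rewrite <- ln_1; apply ln_increasing; lra).
  assert (Hl : ln 2 < ln (2 / eta))
    by (apply ln_increasing; pose proof two_lt_two_div_eta; lra).
  unfold alpha. split; [now apply Rdiv_lt_0_compat|].
  apply Rmult_lt_reg_r with (ln (2 / eta)); [lra|].
  unfold Rdiv. now rewrite Rmult_assoc, Rinv_l, Rmult_1_l, Rmult_1_r by lra.
Qed.

Lemma Rpower_two_div_eta_alpha : Rpower (2 / eta) alpha = 2.
Proof.
  pose proof ln_two_div_eta_pos. unfold Rpower, alpha.
  replace (ln 2 / ln (2 / eta) * ln (2 / eta)) with (ln 2) by (field; lra).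
  apply exp_ln; lra.
Qed.

Lemma Rpower_two_div_eta_pow_alpha k : Rpower ((2 / eta) ^ k) alpha = 2 ^ k.
Proof.
  pose proof two_lt_two_div_eta.
  induction k as [|k IH]; [apply Rpower_1_l|].
  simpl. rewrite <- Rpower_mult_distr by (try apply pow_lt; lra).
  now rewrite IH, Rpower_two_div_eta_alpha.
Qed.

Lemma Rpower_half_eta_alpha x : 0 < x -> 2 * Rpower (eta * x / 2) alpha = Rpower x alpha.
Proof.
  intro Hx. pose proof eta_bounds. pose proof two_lt_two_div_eta.
  assert (Hhalf : Rpower (eta / 2) alpha * 2 = 1).
  { rewrite <- Rpower_two_div_eta_alpha at 2.
    rewrite Rpower_mult_distr by (apply Rdiv_lt_0_compat; lra).
    replace (eta / 2 * (2 / eta)) with 1 by (field; lra). apply Rpower_1_l. }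
  replace (eta * x / 2) with (eta / 2 * x) by field.
  rewrite <- Rpower_mult_distr by (try apply Rdiv_lt_0_compat; lra).
  replace (2 * (Rpower (eta / 2) alpha * Rpower x alpha))
    with (Rpower (eta / 2) alpha * 2 * Rpower x alpha) by ring.
  rewrite Hhalf. ring.
Qed.

Lemma Rpower_eta_alpha_lt_1 : Rpower eta alpha < 1.
Proof.
  pose proof eta_bounds. rewrite <- (Rpower_1_l alpha).
  apply Rlt_Rpower_l; [apply alpha_bounds | lra].
Qed.

Lemma Rpower_alpha_split x y m : 0 < x -> 0 < y -> x + y <= eta * m ->
  Rpower x alpha + Rpower y alpha <= Rpower m alpha.
Proof.
  intros Hx Hy Hm. pose proof eta_bounds.
  rewrite <- (Rpower_half_eta_alpha m) by nra.
  apply Rle_trans with (2 * Rpower ((x + y) / 2) alpha).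
  - apply Rpower_concave_mid; auto. apply alpha_bounds.
  - apply Rmult_le_compat_l; [lra|]. apply Rle_Rpower_l; [left; apply alpha_bounds | lra].
Qed.

(* Bartholdi's norm on Γ: with these weights the two sections of a word weigh together
   at most [eta] times the word. *)
Definition weight_a : R := 1 - eta ^ 3.

Definition weight_klein (v : klein) : R :=
  match v with K1 => 0 | Kb => eta ^ 3 | Kc => 1 - eta ^ 2 | Kd => 1 - eta end.

Definition weight_letter (g : letter) : R :=
  match g with La => weight_a | _ => weight_klein (klein_of_letter g) end.

Definition weight_word (w : list letter) : R :=
  fold_right (fun g r => weight_letter g + r) 0 w.

Definition weight_nf (N : list klein) : R :=
  fold_right (fun v r => weight_a + weight_klein v + r) 0 N.

Lemma weight_word_app w1 w2 : weight_word (w1 ++ w2) = weight_word w1 + weight_word w2.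
Proof. induction w1 as [|g w1 IH]; simpl; [ring | rewrite IH; ring]. Qed.

Lemma weight_a_pos : 0 < weight_a.
Proof. pose proof eta_bounds. unfold weight_a. nra. Qed.

Lemma weight_klein_nonneg v : 0 <= weight_klein v.
Proof. pose proof eta_bounds. destruct v; simpl; nra. Qed.

Lemma weight_klein_mul x y : weight_klein (klein_mul x y) <= weight_klein x + weight_klein y.
Proof. pose proof eta_bounds. destruct x, y; simpl; nra. Qed.

Lemma weight_nf_split w :
  weight_klein (fst (nf_split w)) + weight_nf (snd (nf_split w)) <= weight_word w.
Proof.
  induction w as [|g w IH]; simpl; [lra|].
  destruct (nf_split w) as [v N]. simpl in IH.
  destruct g; simpl; [lra|..];
    [pose proof (weight_klein_mul Kb v) | pose proof (weight_klein_mul Kc v)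
    | pose proof (weight_klein_mul Kd v)]; simpl in *; lra.
Qed.

Lemma weight_nf_le w : weight_nf (nf w) <= weight_word w.
Proof.
  pose proof (weight_nf_split w). pose proof (weight_klein_nonneg (fst (nf_split w))).
  unfold nf. lra.
Qed.

Lemma weight_word_sections N :
  weight_word (word_section true (nf_word N)) + weight_word (word_section false (nf_word N))
  <= eta * weight_nf N.
Proof.
  pose proof eta_bounds.
  induction N as [|v N IH]; [simpl; lra|].
  rewrite !word_section_nf_word_cons, !weight_word_app, !word_section_klein. cbn [negb].
  change (weight_nf (v :: N)) with (weight_a + weight_klein v + weight_nf N).
  destruct v; simpl; unfold weight_a; nra.
Qed.

Lemma weight_nf_ge_length N : weight_a * INR (length N) <= weight_nf N.
Proof.
  induction N as [|v N IH]; [simpl; lra|].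
  pose proof (weight_klein_nonneg v). cbn [length]. rewrite S_INR.
  change (weight_nf (v :: N)) with (weight_a + weight_klein v + weight_nf N). lra.
Qed.

Lemma weight_word_le_length w : weight_word w <= INR (length w).
Proof.
  pose proof eta_bounds.
  induction w as [|g w IH]; [simpl; lra|].
  cbn [length]. rewrite S_INR.
  change (weight_word (g :: w)) with (weight_letter g + weight_word w).
  destruct g; simpl; unfold weight_a; nra.
Qed.

Section UpperBound.

(* Above [threshold], (1 - η^α) m^α >= 2; below it, normal forms are shorter than
   [threshold / weight_a]. *)
Let se : R := Rpower eta alpha.
Let threshold : R := Rpower (2 / (1 - se)) (/ alpha).
Let B : R := threshold / weight_a + 1.

Lemma threshold_pow m : threshold <= m -> 2 / (1 - se) <= Rpower m alpha.
Proof.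
  intro Hm. pose proof alpha_bounds. pose proof Rpower_eta_alpha_lt_1.
  assert (Hpos : 0 < 2 / (1 - se)) by (apply Rdiv_lt_0_compat; unfold se; lra).
  rewrite <- (Rpower_Rpower_inv alpha (2 / (1 - se))) by lra.
  apply Rle_Rpower_l; [lra|]. split; [apply Rpower_pos | exact Hm].
Qed.

Lemma one_le_B : 1 <= B.
Proof.
  pose proof weight_a_pos. pose proof (Rpower_pos (2 / (1 - se)) (/ alpha)).
  unfold B, threshold. assert (0 <= Rpower (2 / (1 - se)) (/ alpha) / weight_a)
    by (left; apply Rdiv_lt_0_compat; lra). lra.
Qed.

Lemma nf_delta_le_B N : weight_nf N < threshold -> INR (nf_delta N) <= B.
Proof.
  intro HN. pose proof weight_a_pos. pose proof (weight_nf_ge_length N).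
  apply Rle_trans with (INR (S (length N))); [apply le_INR, nf_delta_le_length|].
  rewrite S_INR. unfold B. apply Rplus_le_compat_r.
  apply Rmult_le_reg_l with weight_a; [lra|].
  replace (weight_a * (threshold / weight_a)) with threshold by (field; lra). lra.
Qed.

(* If both sections lie above the threshold, concavity of t^α closes the induction; if one
   lies below, the margin (1 - η^α) m^α >= 2 absorbs its bounded contribution. *)
Lemma nf_delta_le_B_pow_step N NA NB :
  threshold <= weight_nf N -> weight_nf NA + weight_nf NB <= eta * weight_nf N ->
  (nf_delta N <= nf_delta NA + nf_delta NB)%nat ->
  (threshold <= weight_nf NA -> INR (nf_delta NA) <= B * Rpower (weight_nf NA) alpha) ->
  (threshold <= weight_nf NB -> INR (nf_delta NB) <= B * Rpower (weight_nf NB) alpha) ->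
  INR (nf_delta N) <= B * Rpower (weight_nf N) alpha.
Proof.
  intros Hm Hsplit Hle IHA IHB. pose proof eta_bounds. pose proof one_le_B.
  pose proof Rpower_eta_alpha_lt_1. pose proof (Rpower_pos eta alpha).
  pose proof (Rpower_pos (2 / (1 - se)) (/ alpha)).
  apply le_INR in Hle. rewrite plus_INR in Hle.
  pose proof (threshold_pow _ Hm) as Hpow.
  assert (Hmargin : 2 <= (1 - se) * Rpower (weight_nf N) alpha).
  { apply Rmult_le_reg_l with (/ (1 - se)); [apply Rinv_0_lt_compat; unfold se; lra|].
    rewrite <- Rmult_assoc, Rinv_l, Rmult_1_l by (unfold se; lra). unfold Rdiv in Hpow. lra. }
  assert (Hone : forall m', threshold <= m' -> m' <= eta * weight_nf N ->
            Rpower m' alpha <= se * Rpower (weight_nf N) alpha).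
  { intros m' Hlo Hhi. unfold se. rewrite Rpower_mult_distr by (unfold threshold in *; lra).
    apply Rle_Rpower_l; [left; apply alpha_bounds | unfold threshold in *; lra]. }
  pose proof (weight_nf_ge_length NA). pose proof (weight_nf_ge_length NB).
  pose proof (pos_INR (length NA)). pose proof (pos_INR (length NB)). pose proof weight_a_pos.
  destruct (Rlt_le_dec (weight_nf NA) threshold) as [HA|HA];
    destruct (Rlt_le_dec (weight_nf NB) threshold) as [HB|HB].
  - pose proof (nf_delta_le_B NA HA). pose proof (nf_delta_le_B NB HB). unfold se in *. nra.
  - pose proof (nf_delta_le_B NA HA). specialize (IHB HB).
    pose proof (Hone _ HB ltac:(nra)). unfold se in *. nra.
  - pose proof (nf_delta_le_B NB HB). specialize (IHA HA).
    pose proof (Hone _ HA ltac:(nra)). unfold se in *. nra.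
  - specialize (IHA HA). specialize (IHB HB).
    pose proof (Rpower_alpha_split (weight_nf NA) (weight_nf NB) (weight_nf N)
                  ltac:(unfold threshold in *; lra) ltac:(unfold threshold in *; lra) Hsplit).
    nra.
Qed.

Lemma nf_delta_le_B_pow_short N : (length N <= 1)%nat -> threshold <= weight_nf N ->
  INR (nf_delta N) <= B * Rpower (weight_nf N) alpha.
Proof.
  intros Hlen Hm. pose proof one_le_B. pose proof (threshold_pow _ Hm).
  pose proof Rpower_eta_alpha_lt_1. pose proof (Rpower_pos eta alpha).
  assert (2 <= 2 / (1 - se)).
  { apply Rmult_le_reg_r with (1 - se); [unfold se; lra|].
    unfold Rdiv. rewrite Rmult_assoc, Rinv_l, Rmult_1_r by (unfold se; lra). unfold se; nra. }
  apply Rle_trans with 2; [|nra].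
  apply Rle_trans with (INR (S (length N))); [apply le_INR, nf_delta_le_length|].
  apply le_INR in Hlen. rewrite S_INR. simpl in Hlen. lra.
Qed.

Lemma nf_delta_le_B_pow N : threshold <= weight_nf N ->
  INR (nf_delta N) <= B * Rpower (weight_nf N) alpha.
Proof.
  remember (length N) as n eqn:Hn. assert (HnN : (length N <= n)%nat) by lia. clear Hn.
  revert N HnN. induction n as [|n IH]; intros N HnN Hm.
  { apply nf_delta_le_B_pow_short; [lia | exact Hm]. }
  destruct (Nat.le_gt_cases (length N) 1) as [Hshort|Hlong].
  { now apply nf_delta_le_B_pow_short. }
  set (NA := nf (word_section true (nf_word N))).
  set (NB := nf (word_section false (nf_word N))).
  destruct (count_a_word_section_le N) as [HA HB].
  apply (nf_delta_le_B_pow_step N NA NB Hm).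
  - pose proof (weight_word_sections N).
    pose proof (weight_nf_le (word_section true (nf_word N))).
    pose proof (weight_nf_le (word_section false (nf_word N))). unfold NA, NB. lra.
  - apply nf_delta_le_sections.
  - apply IH. unfold NA. rewrite length_nf. lia.
  - apply IH. unfold NB. rewrite length_nf. lia.
Qed.

Lemma nf_delta_le_pow N x : 1 <= x -> weight_nf N <= x ->
  INR (nf_delta N) <= B * Rpower x alpha.
Proof.
  intros Hx HN. pose proof one_le_B. pose proof alpha_bounds.
  assert (Hx1 : 1 <= Rpower x alpha)
    by (rewrite <- (Rpower_1_l alpha); apply Rle_Rpower_l; lra).
  destruct (Rlt_le_dec (weight_nf N) threshold) as [Hs|Hl].
  - pose proof (nf_delta_le_B N Hs). nra.
  - apply Rle_trans with (B * Rpower (weight_nf N) alpha); [now apply nf_delta_le_B_pow|].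
    apply Rmult_le_compat_l; [lra|].
    apply Rle_Rpower_l; [lra|]. split; [|exact HN].
    unfold threshold in Hl. pose proof (Rpower_pos (2 / (1 - se)) (/ alpha)). lra.
Qed.

Lemma delta_upper_bound : exists C, 0 < C /\ forall w, (1 <= length w)%nat ->
  INR (delta w) <= C * Rpower (INR (length w)) alpha.
Proof.
  exists B. split; [pose proof one_le_B; lra|].
  intros w Hw. apply Rle_trans with (INR (nf_delta (nf w))); [apply le_INR, delta_le_nf_delta|].
  apply nf_delta_le_pow.
  - apply (le_INR 1) in Hw. exact Hw.
  - eapply Rle_trans; [apply weight_nf_le | apply weight_word_le_length].
Qed.

End UpperBound.

Definition lift_weight_klein (v : klein) : R :=
  match v with K1 => 0 | Kb => 1 | Kc => eta | Kd => eta ^ 2 end.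

Definition lift_weight (N : list klein) : R :=
  fold_right (fun v r => lift_weight_klein v + r) 0 N.

Lemma lift_weight_flat_pairs_cons x y P :
  lift_weight (flat_pairs ((x, y) :: P)) =
  lift_weight_klein x + lift_weight_klein y + lift_weight (flat_pairs P).
Proof. rewrite flat_pairs_cons. simpl. ring. Qed.

Lemma lift_weight_lift S o G : nontrivial S -> G = Kc \/ G = Kd ->
  lift_weight (flat_pairs (lift o G S))
  <= 2 / eta * lift_weight S + (if o then 0 else lift_weight_klein (klein_rot_inv G)) + 5.
Proof.
  pose proof eta_bounds. rewrite two_div_eta.
  revert o G; induction S as [|s S IH]; intros o G HS HG.
  - destruct o; destruct HG as [-> | ->]; unfold flat_pairs; simpl; nra.
  - inversion HS as [|? ? Hs HS']; subst.
    change (lift_weight (s :: S)) with (lift_weight_klein s + lift_weight S).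
    destruct o, s; try congruence; simpl lift; rewrite ?lift_weight_flat_pairs_cons.
    + pose proof (IH false Kd HS' (or_intror eq_refl)). simpl in *. nra.
    + pose proof (IH true G HS' HG). simpl in *. nra.
    + pose proof (IH true G HS' HG). simpl in *. nra.
    + pose proof (IH true G HS' HG). destruct HG as [-> | ->]; simpl in *; nra.
    + pose proof (IH false Kc HS' (or_introl eq_refl)).
      destruct HG as [-> | ->]; simpl in *; nra.
    + pose proof (IH false Kd HS' (or_intror eq_refl)).
      destruct HG as [-> | ->]; simpl in *; nra.
Qed.

Lemma lift_weight_witness_nf k : lift_weight (witness_nf k) + 6 <= 12 * (2 / eta) ^ k.
Proof.
  pose proof two_lt_two_div_eta.
  induction k as [|k IH]; [simpl; lra|].
  pose proof (lift_weight_lift (witness_nf k) false Kc (witness_nf_nontrivial k)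
                (or_introl eq_refl)) as Hstep.
  cbn [klein_rot_inv lift_weight_klein] in Hstep.
  pose proof (Rmult_le_compat_l (2 / eta) _ _ ltac:(lra) IH).
  simpl witness_nf. simpl pow. lra.
Qed.

Lemma lift_weight_ge_length N : nontrivial N -> eta ^ 2 * INR (length N) <= lift_weight N.
Proof.
  pose proof eta_bounds. intro HN.
  induction N as [|v N IH]; [simpl; lra|].
  inversion HN as [|? ? Hv HN']; subst. cbn [length]. rewrite S_INR.
  change (lift_weight (v :: N)) with (lift_weight_klein v + lift_weight N).
  specialize (IH HN'). destruct v; simpl; try congruence; nra.
Qed.

Lemma length_witness_nf k :
  INR (length (nf_word (witness_nf k))) <= 24 / eta ^ 2 * (2 / eta) ^ k.
Proof.
  pose proof eta_bounds.
  rewrite (length_nf_word _ (witness_nf_nontrivial k)), mult_INR. simpl (INR 2).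
  pose proof (lift_weight_ge_length _ (witness_nf_nontrivial k)).
  pose proof (lift_weight_witness_nf k).
  assert (He2 : 0 < eta ^ 2) by nra.
  apply Rmult_le_reg_l with (eta ^ 2); [exact He2|].
  replace (eta ^ 2 * (24 / eta ^ 2 * (2 / eta) ^ k)) with (24 * (2 / eta) ^ k) by (field; lra).
  lra.
Qed.

Lemma exists_word_delta_ge k l : 24 / eta ^ 2 * (2 / eta) ^ k <= INR l ->
  exists w, length w = l /\ (2 ^ k <= delta w)%nat.
Proof.
  intro Hl. set (w0 := nf_word (witness_nf k)).
  assert (Hw0 : (length w0 <= l)%nat)
    by (apply INR_le; eapply Rle_trans; [apply length_witness_nf | exact Hl]).
  exists (repeat La (l - length w0) ++ w0). split.
  - rewrite length_app, repeat_length. lia.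
  - eapply Nat.le_trans; [apply nf_delta_witness_nf|].
    eapply Nat.le_trans; [apply nf_delta_le_delta | apply delta_app_l].
Qed.

Section LowerBound.

Let Cw : R := 24 / eta ^ 2.

Lemma delta_lower_bound_below k l : (1 <= l)%nat -> INR l < Cw * (2 / eta) ^ k ->
  exists w, length w = l /\ Rpower (INR l) alpha <= 2 * Rpower Cw alpha * INR (delta w).
Proof.
  pose proof eta_bounds. pose proof alpha_bounds. pose proof two_lt_two_div_eta.
  pose proof (Rpower_pos Cw alpha) as HsC.
  revert l; induction k as [|k IH]; intros l Hl1 Hl; apply (le_INR 1) in Hl1; simpl in Hl1.
  - exists (repeat La l). split; [apply repeat_length|].
    pose proof (le_INR _ _ (delta_pos (repeat La l))) as Hd. simpl in Hd, Hl.
    assert (Rpower (INR l) alpha <= Rpower Cw alpha) by (apply Rle_Rpower_l; lra). nra.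
  - destruct (Rlt_le_dec (INR l) (Cw * (2 / eta) ^ k)) as [Hlt|Hge];
      [apply IH; auto; apply (INR_le 1); simpl; lra|].
    destruct (exists_word_delta_ge k l Hge) as [w [Hw Hd]].
    exists w. split; [exact Hw|].
    apply le_INR in Hd. rewrite pow_INR in Hd. replace (INR 2) with 2 in Hd by (simpl; lra).
    assert (Hpow : Rpower (INR l) alpha <= Rpower (Cw * (2 / eta) ^ S k) alpha)
      by (apply Rle_Rpower_l; lra).
    rewrite <- Rpower_mult_distr, Rpower_two_div_eta_pow_alpha in Hpow
      by (try apply pow_lt; unfold Cw; apply Rdiv_lt_0_compat; nra).
    simpl pow in Hpow. apply Rle_trans with (Rpower Cw alpha * (2 * 2 ^ k)); [exact Hpow|].
    apply Rmult_le_reg_l with (/ (2 * Rpower Cw alpha)); [apply Rinv_0_lt_compat; lra|].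
    field_simplify; lra.
Qed.

Lemma delta_lower_bound : exists C, 0 < C /\ forall l, (1 <= l)%nat ->
  exists w, length w = l /\ C * Rpower (INR l) alpha <= INR (delta w).
Proof.
  pose proof eta_bounds. pose proof two_lt_two_div_eta.
  pose proof (Rpower_pos Cw alpha) as HsC.
  exists (/ (2 * Rpower Cw alpha)). split; [apply Rinv_0_lt_compat; lra|].
  intros l Hl.
  destruct (delta_lower_bound_below l l Hl) as [w [Hw Hd]].
  - assert (HCw : 1 <= Cw) by (unfold Cw; apply Rmult_le_reg_r with (eta ^ 2); [nra|];
                               field_simplify; nra).
    assert (2 ^ l <= (2 / eta) ^ l) by (apply pow_incr; lra).
    pose proof (INR_lt_pow2 l). pose proof (pow_lt (2 / eta) l ltac:(lra)). nra.
  - exists w. split; [exact Hw|].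
    apply Rmult_le_reg_l with (2 * Rpower Cw alpha); [lra|].
    rewrite <- Rmult_assoc, Rinv_r, Rmult_1_l by lra. exact Hd.
Qed.

End LowerBound.

End Eta.

Theorem corollary4p8 (eta : R)
  (Heta : eta ^ 3 + eta ^ 2 + eta - 2 = 0) :
  exists C1 C2 : R, 0 < C1 /\ 0 < C2 /\
    forall l : nat, (0 < l)%nat ->
      (forall w : list letter, length w = l ->
         INR (delta w) <= C1 * Rpower (INR l) (ln 2 / ln (2 / eta))) /\
      (exists w : list letter, length w = l /\
         C2 * Rpower (INR l) (ln 2 / ln (2 / eta)) <= INR (delta w)).
Proof.
  change (ln 2 / ln (2 / eta)) with (alpha eta).
  destruct (delta_upper_bound eta Heta) as [C1 [HC1 Hupper]].
  destruct (delta_lower_bound eta Heta) as [C2 [HC2 Hlower]].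
  exists C1, C2. split; [exact HC1|]. split; [exact HC2|].
  intros l Hl. split.
  - intros w <-. now apply Hupper.
  - now apply Hlower.
Qed.
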